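(* Let $H$ be a standard finitary set functor with presentation $\varepsilon\colon H_\Sigma\to H$, let $Y$ be a set, and assume that the free corecursive $H$-algebra $(CY,\psi_Y)$ on $Y$ is a cia for $H$. Let $e\colon X\to H_\Sigma X+Y$ be any map, let $e^{\ddagger}\colon X\to T_\Sigma Y$ be the unique map with $e^{\ddagger}=[\tau^\Sigma_Y,\eta^\Sigma_Y]\cdot(H_\Sigma e^{\ddagger}+Y)\cdot e$, put $\bar e=(\varepsilon_X+\eta^C_Y)\cdot e\colon X\to HX+CY$, and let $\bar e^\dagger\colon X\to CY$ be its unique solution in the cia $CY$. Then $$m_Y\cdot\bar e^\dagger=\hat\varepsilon_Y\cdot e^{\ddagger}\colon X\to TY.$$
   Context: Finitary set functor: $HX=\bigcup HY$ over finite $Y\subseteq X$; standard: preserves inclusions and finite intersections. $H_\Sigma X=\coprod_n\Sigma_n\times X^n$; a presentation is a natural transformation $\varepsilon\colon H_\Sigma\to H$ with surjective components. An algebra $a\colon GA\to A$ for an endofunctor $G$ is corecursive if every coalgebra $c\colon Z\to GZ$ admits a unique $s$ with $s=a\cdot Gs\cdot c$; it is a cia if every $f\colon Z\to GZ+A$ admits a unique solution $s$ with $s=[a,\mathrm{id}_A]\cdot(Gs+\mathrm{id}_A)\cdot f$. $T_\Sigma Y$ is the set of all (possibly infinite) $\Sigma$-trees over $Y$ (leaves labeled by constants or elements of $Y$), with tree-tupling structure $\tau^\Sigma_Y\colon H_\Sigma T_\Sigma Y\to T_\Sigma Y$ and $\eta^\Sigma_Y\colon Y\to T_\Sigma Y$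 the singleton trees; it is the free cia for $H_\Sigma$ on $Y$. $(TY,\tau_Y)$ with $\eta_Y\colon Y\to TY$ is the free cia for $H$ on $Y$ (the terminal coalgebra of $H(-)+Y$). $(CY,\psi_Y)$ with $\eta^C_Y\colon Y\to CY$ is the free corecursive $H$-algebra on $Y$, and $m_Y\colon CY\to TY$ is the unique $H$-algebra morphism with $m_Y\cdot\eta^C_Y=\eta_Y$. $\hat\varepsilon_Y\colon T_\Sigma Y\to TY$ is the unique $H_\Sigma$-algebra morphism from $(T_\Sigma Y,\tau^\Sigma_Y)$ to $(TY,\tau_Y\cdot\varepsilon_{TY})$ with $\hat\varepsilon_Y\cdot\eta^\Sigma_Y=\eta_Y$ (it is surjective, the canonical quotient). *)

From Stdlib Require Import List Fin.

Record SetFunctor := {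
  Fob :> Type -> Type;
  fmap : forall (A B : Type), (A -> B) -> Fob A -> Fob B;
  fmap_id : forall (A : Type) (x : Fob A), fmap A A (fun a => a) x = x;
  fmap_comp : forall (A B C : Type) (f : A -> B) (g : B -> C) (x : Fob A),
      fmap A C (fun a => g (f a)) x = fmap B C g (fmap A B f x)
}.
Arguments fmap {s A B} _ _.

Definition incl {X : Type} (P : X -> Prop) : {x : X | P x} -> X :=
  @proj1_sig X P.

Definition finitary (H : SetFunctor) : Prop :=
  forall (X : Type) (x : H X),
    exists (l : list X) (y : H {a : X | In a l}), x = fmap (incl _) y.

Definition preserves_inclusions (H : SetFunctor) : Prop :=
  forall (X : Type) (P : X -> Prop) (a b : H {x : X | P x}),
    fmap (incl P) a = fmap (incl P) b -> a = b.

Definition preserves_finite_intersections (H : SetFunctor) : Prop :=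
  forall (X : Type) (P Q : X -> Prop) (a : H {x : X | P x}) (b : H {x : X | Q x}),
    fmap (incl P) a = fmap (incl Q) b ->
    exists c : H {x : X | P x /\ Q x},
      fmap (incl (fun x => P x /\ Q x)) c = fmap (incl P) a.

Definition standard (H : SetFunctor) : Prop :=
  preserves_inclusions H /\ preserves_finite_intersections H.

(** Polynomial functor H_Sigma X = coprod_n Sigma_n x X^n. *)
Definition HSig_ob (Sig : nat -> Type) (X : Type) : Type :=
  {n : nat & (Sig n * (Fin.t n -> X))%type}.

Definition HSig_map (Sig : nat -> Type) (A B : Type) (f : A -> B)
  (t : HSig_ob Sig A) : HSig_ob Sig B :=
  match t with existT _ n (s, v) => existT _ n (s, fun i => f (v i)) end.

Definition HSig (Sig : nat -> Type) : SetFunctor.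
Proof.
  refine {| Fob := HSig_ob Sig; fmap := HSig_map Sig |}.
  - intros A [n [s v]]; reflexivity.
  - intros A B C f g [n [s v]]; reflexivity.
Defined.

Definition is_presentation (Sig : nat -> Type) (H : SetFunctor)
  (eps : forall X : Type, HSig Sig X -> H X) : Prop :=
  (forall (A B : Type) (f : A -> B) (x : HSig Sig A),
      eps B (fmap f x) = fmap f (eps A x)) /\
  (forall (X : Type) (y : H X), exists x : HSig Sig X, eps X x = y).

Definition is_alg_morphism (G : SetFunctor) (A : Type) (a : G A -> A)
  (B : Type) (b : G B -> B) (h : A -> B) : Prop :=
  forall x : G A, h (a x) = b (fmap h x).

Definition corecursive (G : SetFunctor) (A : Type) (a : G A -> A) : Prop :=
  forall (Z : Type) (c : Z -> G Z),
    exists s : Z -> A,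
      (forall z, s z = a (fmap s (c z))) /\
      (forall s' : Z -> A, (forall z, s' z = a (fmap s' (c z))) ->
                           forall z, s' z = s z).

Definition sol_eq (G : SetFunctor) (A : Type) (a : G A -> A) (Z : Type)
  (f : Z -> G Z + A) (s : Z -> A) : Prop :=
  forall z : Z, s z = match f z with inl t => a (fmap s t) | inr x => x end.

Definition is_cia (G : SetFunctor) (A : Type) (a : G A -> A) : Prop :=
  forall (Z : Type) (f : Z -> G Z + A),
    exists s : Z -> A,
      sol_eq G A a Z f s /\
      (forall s' : Z -> A, sol_eq G A a Z f s' -> forall z, s' z = s z).

Definition free_cia (G : SetFunctor) (Y : Type) (A : Type) (a : G A -> A)
  (eta : Y -> A) : Prop :=
  is_cia G A a /\
  forall (B : Type) (b : G B -> B) (g : Y -> B), is_cia G B b ->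
    exists h : A -> B,
      is_alg_morphism G A a B b h /\ (forall y, h (eta y) = g y) /\
      (forall h' : A -> B, is_alg_morphism G A a B b h' ->
         (forall y, h' (eta y) = g y) -> forall x, h' x = h x).

Definition free_corecursive (G : SetFunctor) (Y : Type) (A : Type)
  (a : G A -> A) (eta : Y -> A) : Prop :=
  corecursive G A a /\
  forall (B : Type) (b : G B -> B) (g : Y -> B), corecursive G B b ->
    exists h : A -> B,
      is_alg_morphism G A a B b h /\ (forall y, h (eta y) = g y) /\
      (forall h' : A -> B, is_alg_morphism G A a B b h' ->
         (forall y, h' (eta y) = g y) -> forall x, h' x = h x).

(** Both sides of the equation are solutions, in the cia [TY], of the same
    flat equation [(eps_X + eta_Y) . e : X -> HX + TY]: the left side because
    [m_Y] is an [H]-algebra morphism, the right side because [epshat_Y] is an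
    [H_Sigma]-algebra morphism into [(TY, tau_Y . eps_TY)] and [eps] is natural.
    Uniqueness of solutions in [TY] concludes. *)


Definition sum_bimap {A B A' B' : Type} (f : A -> A') (g : B -> B')
  (x : A + B) : A' + B' :=
  match x with inl a => inl (f a) | inr b => inr (g b) end.

Lemma sol_eq_ext (G : SetFunctor) (A : Type) (a : G A -> A) (Z : Type)
  (f f' : Z -> G Z + A) (s : Z -> A) :
  sol_eq G A a Z f s -> (forall z, f z = f' z) -> sol_eq G A a Z f' s.
Proof. intros Hs Hf z; rewrite <- Hf; apply Hs. Qed.

Lemma cia_sol_unique (G : SetFunctor) (A : Type) (a : G A -> A) (Z : Type)
  (f : Z -> G Z + A) (s s' : Z -> A) :
  is_cia G A a -> sol_eq G A a Z f s -> sol_eq G A a Z f s' ->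
  forall z, s z = s' z.
Proof.
  intros cia Hs Hs' z.
  destruct (cia Z f) as [u [_ u_unique]].
  rewrite (u_unique s Hs z), (u_unique s' Hs' z); reflexivity.
Qed.

Lemma sol_eq_alg_morphism (G : SetFunctor) (A : Type) (a : G A -> A)
  (B : Type) (b : G B -> B) (h : A -> B) (Z : Type)
  (f : Z -> G Z + A) (s : Z -> A) :
  is_alg_morphism G A a B b h -> sol_eq G A a Z f s ->
  sol_eq G B b Z (fun z => sum_bimap (fun t => t) h (f z)) (fun z => h (s z)).
Proof.
  intros hom Hs z; rewrite (Hs z).
  destruct (f z) as [t | x]; simpl; [| reflexivity].
  rewrite hom; f_equal; symmetry; apply (fmap_comp G).
Qed.

Lemma sol_eq_natural (G' G : SetFunctor) (eps : forall X : Type, G' X -> G X)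
  (A : Type) (b : G A -> A) (Z : Type) (f : Z -> G' Z + A) (s : Z -> A) :
  (forall (U V : Type) (g : U -> V) (x : G' U), eps V (fmap g x) = fmap g (eps U x)) ->
  sol_eq G' A (fun t => b (eps A t)) Z f s ->
  sol_eq G A b Z (fun z => sum_bimap (eps Z) (fun x => x) (f z)) s.
Proof.
  intros nat_eps Hs z; rewrite (Hs z).
  destruct (f z) as [t | x]; simpl; [rewrite nat_eps |]; reflexivity.
Qed.

Theorem mainTheorem10
  (H : SetFunctor) (Sig : nat -> Type) (eps : forall X : Type, HSig Sig X -> H X)
  (Y : Type)
  (TS : Type) (tauS : HSig Sig TS -> TS) (etaS : Y -> TS)
  (T : Type) (tau : H T -> T) (eta : Y -> T)
  (C : Type) (psi : H C -> C) (etaC : Y -> C)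
  (m : C -> T) (epshat : TS -> T)
  (X : Type) (e : X -> HSig Sig X + Y) (edd : X -> TS) (ebar_dag : X -> C) :
  finitary H -> standard H -> is_presentation Sig H eps ->
  (* (T_Sigma Y, tau^Sigma_Y, eta^Sigma_Y): free cia for H_Sigma on Y *)
  free_cia (HSig Sig) Y TS tauS etaS ->
  (* (TY, tau_Y, eta_Y): free cia for H on Y *)
  free_cia H Y T tau eta ->
  (* (CY, psi_Y, eta^C_Y): free corecursive H-algebra on Y, assumed a cia *)
  free_corecursive H Y C psi etaC ->
  is_cia H C psi ->
  (* m_Y: the H-algebra morphism CY -> TY with m_Y . eta^C_Y = eta_Y *)
  is_alg_morphism H C psi T tau m -> (forall y, m (etaC y) = eta y) ->
  (* epshat_Y: the H_Sigma-algebra morphism to (TY, tau_Y . eps_TY) extending eta_Y *)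
  is_alg_morphism (HSig Sig) TS tauS T (fun t => tau (eps T t)) epshat ->
  (forall y, epshat (etaS y) = eta y) ->
  (* e^ddagger = [tau^Sigma_Y, eta^Sigma_Y] . (H_Sigma e^ddagger + Y) . e *)
  sol_eq (HSig Sig) TS tauS X
    (fun x => match e x with inl t => inl t | inr y => inr (etaS y) end) edd ->
  (* ebar^dagger: solution of ebar = (eps_X + eta^C_Y) . e in the cia CY *)
  sol_eq H C psi X
    (fun x => match e x with inl t => inl (eps X t) | inr y => inr (etaC y) end)
    ebar_dag ->
  forall x : X, m (ebar_dag x) = epshat (edd x).
Proof.
  intros _ _ [nat_eps _] _ [ciaT _] _ _ m_hom m_eta epshat_hom epshat_eta
    edd_sol ebar_sol.
  change (sol_eq H C psi X (fun x => sum_bimap (eps X) etaC (e x)) ebar_dag)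
    in ebar_sol.
  change (sol_eq (HSig Sig) TS tauS X (fun x => sum_bimap (fun t => t) etaS (e x)) edd)
    in edd_sol.
  set (ebarT := fun x => sum_bimap (eps X) eta (e x)).
  assert (left_sol : sol_eq H T tau X ebarT (fun x => m (ebar_dag x))).
  { apply (sol_eq_alg_morphism _ _ _ _ _ _ _ _ _ m_hom) in ebar_sol.
    refine (sol_eq_ext _ _ _ _ _ _ _ ebar_sol _).
    intro z; unfold ebarT; destruct (e z); simpl; [| rewrite m_eta]; reflexivity. }
  assert (right_sol : sol_eq H T tau X ebarT (fun x => epshat (edd x))).
  { apply (sol_eq_alg_morphism _ _ _ _ _ _ _ _ _ epshat_hom) in edd_sol.
    apply (sol_eq_natural _ _ _ _ _ _ _ _ nat_eps) in edd_sol.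
    refine (sol_eq_ext _ _ _ _ _ _ _ edd_sol _).
    intro z; unfold ebarT; destruct (e z); simpl; [| rewrite epshat_eta]; reflexivity. }
  exact (cia_sol_unique _ _ _ _ _ _ _ ciaT left_sol right_sol).
Qed.
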